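(* Let $q$ be a prime power, let $k < q$ and $t \geq 1$ be integers, and let $C(X) \in \mathbb{F}_q[X]$ be a nonzero polynomial of the form $$C(X) = \sum_{i=0}^{t-1} C_i(X)\Lambda^i(X),$$ where $\Lambda(X) = X^q - X$ and $\deg(C_i) \leq k$ for all $i$. Let $H(X) \in \mathbb{F}_q[X]$ be irreducible, and let $\mu$ be the largest integer such that $H(X)^\mu$ divides $C(X)$. Then $\mu \bmod q \in [0, k+t-1]$. *)

From HB Require Import structures.
From mathcomp Require Import all_boot all_order all_algebra all_field.
Set Implicit Arguments. Unset Strict Implicit. Unset Printing Implicit Defensive.
Import GRing.Theory.
Local Open Scope ring_scope.

Definition Lambda (F : fieldType) (q : nat) : {poly F} := 'X^q - 'X.

(* Let r = mu mod q and suppose r >= k + t.  A Hasse derivative D^(r) of order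
   r < q commutes with multiplication by q-th powers, because the Taylor shift
   f(X + Y)^q = f(X)^q + Y^q (...) has no Y-coefficients of degree 0 < j < q.
   Hence D^(r) kills each C_i Lambda^i = C_i (X^q - X)^i, as r > deg C_i + i,
   so D^(r) C = 0.  Writing C = (H^(mu div q))^q H^r U with H not dividing U
   gives D^(r) (H^r U) = 0, whereas D^(r) (H^r U) = H'^r U mod H.  Over a finite
   field the irreducible H is not a p-th power, so H' <> 0 is coprime to H, and
   H would divide U. *)

From HB Require Import structures.
From mathcomp Require Import all_boot all_order all_algebra all_field.
From mathcomp Require Import zify.
Import GRing.Theory.
Local Open Scope ring_scope.
Set Implicit Arguments. Unset Strict Implicit. Unset Printing Implicit Defensive.

Section Taylor.
Variable R : comNzRingType.
Implicit Types f g : {poly R}.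

(* f(X + Y), with Y the outer variable. *)
Definition taylor f : {poly {poly R}} := f^:P \Po ('X%:P + 'X).

Lemma coef_taylor f i : (taylor f)`_i = f^`N(i).
Proof.
have -> : taylor f = \poly_(j < size f) f^`N(j).
  rewrite /taylor /comp_poly nderiv_taylor; last exact: mulrC.
  rewrite poly_def !size_map_polyC; apply: eq_bigr => j _.
  by rewrite !nderivn_map horner_map /= -/(comp_poly _ _) comp_polyXr mul_polyC.
rewrite coef_poly; case: ltnP => // le_f_i.
by rewrite nderivn_poly0.
Qed.

Lemma taylorM f g : taylor (f * g) = taylor f * taylor g.
Proof. by rewrite /taylor !rmorphM. Qed.

Lemma taylorXn f n : taylor (f ^+ n) = taylor f ^+ n.
Proof. by rewrite /taylor !rmorphXn. Qed.

Lemma nderivnM f g n :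
  (f * g)^`N(n) = \sum_(i < n.+1) f^`N(i) * g^`N(n - i).
Proof.
rewrite -coef_taylor taylorM coefM.
by apply: eq_bigr => i _; rewrite !coef_taylor.
Qed.

End Taylor.

Lemma pchar_poly_nat (R : nzRingType) n : [pchar {poly R}].-nat n = [pchar R].-nat n.
Proof. exact/eq_pnat/pchar_poly. Qed.

Section PcharPower.
Variables (R : comNzRingType) (q : nat).
Implicit Types f g : {poly R}.

Lemma exprn_pchar_comp g : [pchar R].-nat q ->
  g ^+ q = (\poly_(i < size g) g`_i ^+ q) \Po 'X^q.
Proof.
move=> pcharRq; have q_gt0 : (0 < q)%N by case/andP: pcharRq.
rewrite -pchar_poly_nat in pcharRq.
rewrite -{1}[g]coefK !poly_def linear_sum /=.
rewrite (big_morph _ (fun x y => exprDn_pchar x y pcharRq) (expr0n _ _)).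
rewrite /= eqn0Ngt q_gt0 /=.
by apply: eq_bigr => i _; rewrite exprZn linearZ /= comp_Xn_poly -!exprM mulnC.
Qed.

Lemma coef_exprn_pchar g i : [pchar R].-nat q ->
  (g ^+ q)`_i = if (q %| i)%N then g`_(i %/ q) ^+ q else 0.
Proof.
move=> pcharRq; have q_gt0 : (0 < q)%N by case/andP: pcharRq.
rewrite exprn_pchar_comp // coef_comp_poly_Xn // coef_poly.
case: ifP => // _; case: ltnP => // le_g.
by rewrite nth_default // expr0n eqn0Ngt q_gt0.
Qed.

End PcharPower.

Lemma nderivn_exprn_pcharM (R : comNzRingType) q (f V : {poly R}) r :
  [pchar R].-nat q -> (r < q)%N -> (f ^+ q * V)^`N(r) = f ^+ q * V^`N(r).
Proof.
rewrite -pchar_poly_nat => pcharRq lt_r_q.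
rewrite -coef_taylor taylorM taylorXn coefM big_ord_recl big1 => [|j _].
  by rewrite addr0 coef_exprn_pchar // dvdn0 div0n !coef_taylor nderivn0 subn0.
rewrite coef_exprn_pchar // ifN ?mul0r //.
by rewrite gtnNdvd // (leq_ltn_trans (ltn_ord j)).
Qed.

Lemma pchar_nat_card (F : finFieldType) : [pchar F].-nat #|F|.
Proof.
have [p pr_p pcharFp] := finPcharP F.
by rewrite (card_pprimeChar pcharFp) pnatX (pnatE _ pr_p) pcharFp.
Qed.

Lemma nderivn_Lambda (F : finFieldType) (A : {poly F}) i j :
  (size A + i <= j)%N -> (j < #|F|)%N -> (A * Lambda F #|F| ^+ i)^`N(j) = 0.
Proof.
move=> + lt_j_F; elim: i A => [|i IHi] A le_Ai_j.
  by rewrite expr0 mulr1 nderivn_poly0 // -(addn0 (size A)).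
rewrite exprSr mulrA /Lambda mulrBr nderivnB -/(Lambda F #|F|).
rewrite [_ * 'X^_]mulrC nderivn_exprn_pcharM ?pchar_nat_card // IHi ?mulr0.
  rewrite -mulrA [_ * 'X]mulrC mulrA IHi ?subrr //.
  rewrite (leq_trans _ le_Ai_j) // addnS -addSn leq_add2r.
  by rewrite (leq_trans (size_polyMleq _ _)) // size_polyX addn2.
by rewrite (leq_trans _ le_Ai_j) // leq_add2l.
Qed.

Lemma dvdp_sum (F : fieldType) I (r : seq I) (P : pred I) (G : I -> {poly F}) d :
  (forall i, P i -> d %| G i) -> d %| \sum_(i <- r | P i) G i.
Proof. by move=> dG; elim/big_rec: _ => // i p /dG; apply: dvdp_add. Qed.

Section NderivnExprM.
Variables (F : fieldType) (H U : {poly F}).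

Lemma dvdp_nderivn_exprM m i : (i < m)%N -> H %| (H ^+ m * U)^`N(i).
Proof.
elim: m i => // m IHm i lt_i_m.
rewrite exprS -mulrA nderivnM; apply: dvdp_sum => -[[|a] lt_a_i] _ /=.
  by rewrite nderivn0 dvdp_mulr.
by rewrite dvdp_mull // IHm //; lia.
Qed.

Lemma dvdp_nderivn_exprM_deriv m : H %| (H ^+ m * U)^`N(m) - H^`() ^+ m * U.
Proof.
elim: m => [|m IHm]; first by rewrite !expr0 !mul1r nderivn0 subrr dvdp0.
rewrite exprS -mulrA nderivnM !big_ord_recl nderivn0 nderivn1 subSS !subn0.
rewrite -addrA dvdp_addr ?dvdp_mulIl // exprS -mulrA -addrA addrC -addrA.
rewrite dvdp_addr; last first.
  apply: dvdp_sum => i _; rewrite dvdp_mull ?dvdp_nderivn_exprM //.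
  by rewrite !lift0; have := ltn_ord i; lia.
by rewrite addrC -mulrBr dvdp_mull.
Qed.

End NderivnExprM.

Lemma coef_deriv_eq0_pchar (R : idomainType) p (f : {poly R}) i :
  p \in [pchar R] -> f^`() = 0 -> ~~ (p %| i)%N -> f`_i = 0.
Proof.
move=> pcharRp f'0; case: i => [|i]; first by rewrite dvdn0.
rewrite (dvdn_pcharf pcharRp) => /negPf nz_i.
apply/eqP; move/polyP/(_ i)/eqP: f'0.
by rewrite coef_deriv coef0 -mulr_natr mulf_eq0 nz_i orbF.
Qed.

Lemma deriv_eq0_exprn_pchar (F : finFieldType) p (f : {poly F}) :
  p \in [pchar F] -> f^`() = 0 -> exists g, f = g ^+ p.
Proof.
move=> pcharFp f'0; have pr_p := pcharf_prime pcharFp.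
have [frob_inv _ frob_invK] := injF_bij (fmorph_inj (pFrobenius_aut pcharFp)).
exists (\poly_(j < size f) frob_inv f`_(j * p)); apply/polyP => i.
rewrite coef_exprn_pchar ?pnatE ?inE //.
case: ifP => [/dvdnP[j ->] | /negbT]; last exact: coef_deriv_eq0_pchar.
rewrite mulnK ?prime_gt0 // coef_poly; case: ltnP => [_ | le_f_j].
  by rewrite -[LHS]frob_invK.
have p_gt0 := prime_gt0 pr_p.
rewrite nth_default ?expr0n ?gtn_eqF // (leq_trans le_f_j) //.
by rewrite leq_pmulr.
Qed.

Lemma irredp_exprn_leq1 (R : idomainType) (g : {poly R}) n :
  irreducible_poly (g ^+ n) -> (n <= 1)%N.
Proof.
case: n => // n irr_gn; have := size_exp g n.+1; have := irr_gn.1.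
have [g1 | g_neq1] := eqVneq (size g) 1%N; first by rewrite g1 mul0n; lia.
have g_dvd : g %| g ^+ n.+1 by rewrite exprS dvdp_mulr.
rewrite -(eqp_size (irr_gn.2 g g_neq1 g_dvd)); nia.
Qed.

Section IrreducibleFinField.
Variables (F : finFieldType) (H : {poly F}).
Hypothesis irrH : irreducible_poly H.

Lemma irredp_deriv_neq0 : H^`() != 0.
Proof.
apply/eqP => H'0; have [p pr_p pcharFp] := finPcharP F.
have [g Hg] := deriv_eq0_exprn_pchar pcharFp H'0.
by move: irrH; rewrite Hg => /irredp_exprn_leq1; rewrite leqNgt prime_gt1.
Qed.

Lemma coprimep_irred_deriv : coprimep H H^`().
Proof.
rewrite irreducible_poly_coprime // gtNdvdp ?irredp_deriv_neq0 //.
by rewrite lt_size_deriv ?irredp_neq0.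
Qed.

Lemma nderivn_exprM_eq0_dvdp U m : (H ^+ m * U)^`N(m) = 0 -> H %| U.
Proof.
move=> Dm0; have := dvdp_nderivn_exprM_deriv H U m.
by rewrite Dm0 sub0r dvdpNr Gauss_dvdpr // coprimep_expr // coprimep_irred_deriv.
Qed.

End IrreducibleFinField.

Theorem lemma3p3 (F : finFieldType) (q k t : nat) (Cs : nat -> {poly F})
  (C H : {poly F}) (mu : nat) :
  #|F| = q -> (k < q)%N -> (1 <= t)%N ->
  (forall i, (i < t)%N -> (size (Cs i) <= k.+1)%N) ->
  C = \sum_(i < t) Cs i * Lambda F q ^+ i ->
  C != 0 ->
  irreducible_poly H ->
  H ^+ mu %| C -> ~~ (H ^+ mu.+1 %| C) ->
  (mu %% q <= k + t - 1)%N.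
Proof.
(* 1 <= t and C != 0 are implied by ~~ (H ^+ mu.+1 %| C). *)
move=> <- lt_k_q _ size_Cs C_def _ irrH dvd_mu ndvd_mu1.
rewrite leqNgt; apply/negP => lt_r; set r := (mu %% #|F|)%N in lt_r.
have lt_r_q : (r < #|F|)%N by rewrite ltn_mod; lia.
have [U C_eq ndvd_U] : exists2 U, C = H ^+ mu * U & ~~ (H %| U).
  exists (C %/ H ^+ mu); first by rewrite mulrC divpK.
  apply: contra ndvd_mu1 => dvd_U.
  by rewrite -(divpK dvd_mu) exprS dvdp_mul.
have Cr0 : C^`N(r) = 0.
  rewrite C_def linear_sum big1 // => i _; apply: nderivn_Lambda => //.
  by have := size_Cs i (ltn_ord i); have := ltn_ord i; lia.
apply: (negP ndvd_U); apply: (nderivn_exprM_eq0_dvdp irrH (m := r)).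
move: Cr0; rewrite C_eq {1}(divn_eq mu #|F|) exprD exprM -mulrA.
rewrite nderivn_exprn_pcharM ?pchar_nat_card // => /eqP.
by rewrite mulf_eq0 !expf_eq0 (negbTE (irredp_neq0 irrH)) !andbF => /eqP.
Qed.
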